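(* Let $k,N\ge0$ and $g\in\mathcal M(k)$. The quadratic form $h\mapsto Q_{A,2}(gh)$ on $V_N$ has polar rank at least $\max\{0,N-k-m+1\}$. Consequently, with $n=k+N$ and any non-trivial additive character $\psi$, \[ \Bigl|\sum_{h\in\mathcal M(N)}\psi(Q_A(gh))\Bigr|\ll_A q^{N-\max(0,N-k-m)/2}, \] with implied constant depending only on $q$ and $A$, uniformly in $\ell_n$ and $\psi$.
   Context: $q$ is an odd prime power; fix $m\ge0$, $c_0,\dots,c_m\in\mathbb F_q$ with $c_m\ne0$, $A(z)=c_0+\tfrac12\sum_{\ell=1}^m c_\ell(z^\ell+z^{-\ell})$. $Q_{A,2}(f)=\operatorname{CT}\,A(z)f(z)f(z^{-1})=\sum_{j=0}^m c_j\sum_{i\ge j}f_if_{i-j}$. For each $n$, $\ell_n$ is an arbitrary linear form in the coefficients $f_0,\dots,f_n$, and for $f$ of degree $n$, $Q_A(f)=Q_{A,2}(f)+\ell_n(f)$. $\mathcal M(k)$ is the set of monic polynomials of degree $k$, $V_N$ the space of polynomials of degree $\le N$. Polar rank is the rank of $(x,y)\mapsto Q(x+y)-Q(x)-Q(y)$. *)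

From mathcomp Require Import all_boot all_order all_algebra all_field.
Set Implicit Arguments. Unset Strict Implicit. Unset Printing Implicit Defensive.
Import Order.TTheory GRing.Theory Num.Theory.
Local Open Scope ring_scope.

(* A(z) = c_0 + 1/2 sum_{l=1}^m c_l (z^l + z^-l), coefficients c : 'I_m.+1 -> F.
   Q_{A,2}(f) = sum_{j=0}^m c_j sum_{i >= j} f_i f_{i-j}. *)
Definition QA2 (F : fieldType) (m : nat) (c : 'I_m.+1 -> F) (f : {poly F}) : F :=
  \sum_(j < m.+1) c j * \sum_(j <= i < size f) f`_i * f`_(i - j).

Definition QA (F : fieldType) (m : nat) (c : 'I_m.+1 -> F) (n : nat)
    (l : nat -> F) (f : {poly F}) : F :=
  QA2 c f + \sum_(i < n.+1) l i * f`_i.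

Definition polar (F : fieldType) (V : zmodType) (Q : V -> F) (x y : V) : F :=
  Q (x + y) - Q x - Q y.

Definition polar_rank_VN (F : fieldType) (N : nat) (Q : {poly F} -> F) : nat :=
  \rank (\matrix_(i < N.+1, j < N.+1) polar Q 'X^i 'X^j).

Definition nontriv_add_char (F : fieldType) (psi : F -> algC) : Prop :=
  psi 0 = 1 /\ (forall x y, psi (x + y) = psi x * psi y) /\ exists x, psi x != 1.

From mathcomp Require Import all_boot all_order all_algebra all_field.
From mathcomp Require Import ring zify fingroup cyclic.
Set Implicit Arguments.
Unset Strict Implicit.
Unset Printing Implicit Defensive.
Import Order.TTheory GRing.Theory Num.Theory.
Local Open Scope ring_scope.

(* Let v be the order of vanishing of g at 0, so that g X^i has its coefficients in
   [i + v, i + k].  As A has width m, the polar form B of h |-> Q_{A,2}(g h) satisfies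
   B(X^i, X^j) = 0 for j > i + d, where d = m + k - v <= k + m, and on the edge
   j = i + d only the coefficient c_m survives: B(X^i, X^(i+d)) = c_m g_v, doubled
   when m = 0 (this is where q odd is used).  Hence the Gram matrix on V_N contains a
   triangular minor of size N + 1 - d, and a vector of the radical of B on V_(N-1) is
   determined by its first d coefficients.  For the character sum, write a monic h of
   degree N as X^N + y: by Weyl differencing |S|^2 <= q^N #radical <= q^N q^min(N, k+m). *)

Lemma mulrn_card (V : finZmodType) (x : V) : x *+ #|V| = 0.
Proof. by have := expg_cardG (in_setT x); rewrite cardsT. Qed.

Lemma two_neq0_odd_card (F : finFieldType) : odd #|F| -> (2 : F) != 0.
Proof.
move=> oddF; apply/eqP => two0; have /eqP := mulrn_card (1 : F).
by rewrite -(odd_double_half #|F|) oddF mulrnDr -mul2n mulrnA two0 mul0rn addr0 oner_eq0.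
Qed.

Lemma poly_valuation (R : nzRingType) (p : {poly R}) :
  p != 0 -> exists2 v, p`_v != 0 & forall b, (b < v)%N -> p`_b = 0.
Proof.
rewrite -lead_coef_eq0 => lead_neq0.
case: (ex_minnP (ex_intro (fun b => p`_b != 0) _ lead_neq0)) => v pv v_min.
by exists v => // b; apply: contraTeq => /v_min; rewrite leqNgt.
Qed.

Lemma mxrank_mxsub (F : fieldType) (m n m' n' : nat)
    (f : 'I_m' -> 'I_m) (g : 'I_n' -> 'I_n) (A : 'M[F]_(m, n)) :
  (\rank (mxsub f g A) <= \rank A)%N.
Proof.
rewrite -[A]mul1mx mxsub_mul -[A in mxsub id _ A]mulmx1 -mulmx_colsub mul1mx.
exact: leq_trans (mxrankM_maxr _ _) (mxrankM_maxl _ _).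
Qed.

Section AdditiveCharacter.
Variables (F : finFieldType) (psi : F -> algC).
Hypothesis psi_char : nontriv_add_char psi.

Lemma add_char0 : psi 0 = 1.
Proof. by case: psi_char. Qed.

Lemma add_charD x y : psi (x + y) = psi x * psi y.
Proof. by case: psi_char => _ []. Qed.

Lemma add_charMn x n : psi (x *+ n) = psi x ^+ n.
Proof. by elim: n => [|n IHn]; rewrite ?add_char0 // mulrS add_charD IHn exprS. Qed.

Lemma norm_add_char x : `|psi x| = 1.
Proof.
have /eqP : `|psi x| ^+ #|F| = 1 by rewrite -normrX -add_charMn mulrn_card add_char0 normr1.
by rewrite pexpr_eq1 ?normr_ge0 // => [/eqP|]; last by apply/card_gt0P; exists 0.
Qed.

Lemma conj_add_char x : (psi x)^* = psi (- x).
Proof.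
have psi_neq0 : psi x != 0 by rewrite -normr_eq0 norm_add_char oner_neq0.
apply: (mulfI psi_neq0); rewrite -add_charD subrr add_char0.
by rewrite -normCK norm_add_char expr1n.
Qed.

Section CharacterSums.
Variable V : finLmodType F.

Lemma add_char_sum_scalar (f : V -> F) : scalar f ->
  \sum_(y : V) psi (f y) = if [forall y, f y == 0] then #|V|%:R else 0.
Proof.
move=> f_lin; case: ifP => [/forallP f0|].
  by rewrite (eq_bigr (fun=> 1)) ?sumr_const // => y _; rewrite (eqP (f0 y)) add_char0.
move/negbT; rewrite negb_forall => /existsP[y0 fy0].
have [x0 psix0] : exists x0, psi x0 != 1 by case: psi_char => _ [].
pose y1 := (x0 / f y0) *: y0.
have fy1 : f y1 = x0 by rewrite (scalable_linear f_lin) /= mulfVK.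
(* Translating by y1 multiplies the sum by psi x0 != 1. *)
set S := \sum_(y : V) _; have : S * (psi x0 - 1) = 0.
  apply/eqP; rewrite mulrBr mulr1 subr_eq0 {2}/S (reindex_inj (addIr y1)) mulr_suml.
  by apply/eqP/eq_bigr => y _; rewrite -[y in y + y1]scale1r f_lin /= mul1r add_charD fy1.
by move/eqP; rewrite mulf_eq0 subr_eq0 (negbTE psix0) orbF => /eqP.
Qed.

Lemma sqr_norm_add_char_sum_le (Phi D : V -> F) (beta : V -> V -> F) :
    (forall y t, Phi (y + t) = Phi y + D t + beta y t) ->
    (forall t, scalar (beta ^~ t)) ->
  `|\sum_(y : V) psi (Phi y)| ^+ 2 <=
    #|V|%:R * #|[set t : V | [forall y, beta y t == 0]]|%:R.
Proof.
move=> PhiD beta_lin; set S := \sum_(y : V) _.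
(* Expand |S|^2 = S * S^* and substitute x = y + t in the double sum. *)
have E : `|S| ^+ 2 = \sum_(t : V) psi (D t) * \sum_(y : V) psi (beta y t).
  rewrite normCK mulrC rmorph_sum mulr_suml.
  under eq_bigr => y _ do rewrite mulr_sumr (reindex_inj (addrI y)).
  rewrite exchange_big /=; apply: eq_bigr => t _; rewrite mulr_sumr.
  by apply: eq_bigr => y _; rewrite conj_add_char -!add_charD PhiD; congr psi; ring.
rewrite -[`|S| ^+ 2]ger0_norm ?exprn_ge0 // E (le_trans (ler_norm_sum _ _ _)) //.
rewrite -sum1_card natr_sum mulr_sumr.
rewrite [X in _ <= X]big_mkcond /= ler_sum // => t _.
rewrite normrM norm_add_char mul1r (@add_char_sum_scalar _ (beta_lin t)) inE.
by case: ifP; rewrite ?normr0 ?normr_nat ?mulr1.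
Qed.
End CharacterSums.
End AdditiveCharacter.

Section BandForm.
Variables (F : fieldType) (b : {poly F} -> {poly F} -> F) (d N : nat).
Hypothesis b_band : forall i j, (i + d < j)%N -> b 'X^i 'X^j = 0.
Hypothesis b_diag : forall i, (i + d <= N)%N -> b 'X^i 'X^(i + d) != 0.

Lemma band_gram_rank :
  (N.+1 - d <= \rank (\matrix_(i < N.+1, j < N.+1) b 'X^i 'X^j))%N.
Proof.
set r := (N.+1 - d)%N.
have ord_r (i : 'I_r) : (i + d <= N)%N by have := ltn_ord i; lia.
pose row_of (i : 'I_r) : 'I_N.+1 := inord i.
pose col_of (i : 'I_r) : 'I_N.+1 := inord (i + d).
have row_ofE i : row_of i = i :> nat by rewrite inordK //; have := ord_r i; lia.
have col_ofE i : col_of i = (i + d)%N :> nat by rewrite inordK //; have := ord_r i; lia.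
apply: leq_trans _ (mxrank_mxsub row_of col_of _).
rewrite mxrank_unit ?leqnn // unitmxE unitfE det_trig; last first.
  by apply/is_trig_mxP => i j ij; rewrite !mxE row_ofE col_ofE b_band ?ltn_add2r.
by rewrite prodf_seq_neq0; apply/allP => i _; rewrite !mxE row_ofE col_ofE b_diag.
Qed.

Hypothesis b_lin : forall u, scalar (b u).

Lemma band_radical_eq0 (t : {poly F}) : (size t <= N)%N ->
    (forall i, (i < N)%N -> b 'X^i t = 0) -> (forall a, (a < d)%N -> t`_a = 0) ->
  t = 0.
Proof.
move=> tN t_rad t_low; apply/polyP => a; rewrite coef0.
elim/ltn_ind: a => a IHa; have [/t_low //|da] := ltnP a d.
have [a_size|] := ltnP a (size t); last exact: nth_default.
pose i := (a - d)%N; have ai : a = (i + d)%N by rewrite /i subnK.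
(* Pairing with X^(a - d) isolates t_a: the band kills the higher coefficients and the
   induction hypothesis the lower ones. *)
have b_sum : b 'X^i t = \sum_(c < size t) t`_c * b 'X^i 'X^c.
  rewrite -{1}[t]coefK poly_def; elim/big_rec2: _ => [|c x y _ <-].
    by rewrite -(scale0r (0 : {poly F})) (scalable_linear (b_lin _)) /= mul0r.
  by rewrite b_lin.
have iN : (i < N)%N by lia.
have := t_rad _ iN; rewrite b_sum (bigD1 (Ordinal a_size)) //= big1 ?addr0; last first.
  move=> c /eqP/val_eqP/= ca; have [/IHa->|ac] := ltnP c a; first by rewrite mul0r.
  by rewrite b_band ?mulr0 // -ai ltn_neqAle eq_sym ca.
rewrite {2}ai => /eqP; rewrite mulf_eq0 (negbTE (b_diag _)) ?orbF => [/eqP //|].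
by rewrite -ai ltnW // (leq_trans a_size tN).
Qed.

End BandForm.

Lemma card_band_radical (F : finFieldType) (b : {poly F} -> {poly F} -> F) (d N : nat) :
    (forall i j, (i + d < j)%N -> b 'X^i 'X^j = 0) ->
    (forall i, (i + d <= N)%N -> b 'X^i 'X^(i + d) != 0) ->
    (forall u, scalar (b u)) ->
  (#|[set t : {poly_N F} | [forall y : {poly_N F}, b y t == 0%R]]| <= #|F| ^ d)%N.
Proof.
move=> b_band b_diag b_lin; pose low (t : {poly_N F}) := [ffun a : 'I_d => t`_a].
rewrite -(card_in_imset (f := low)).
  by rewrite (leq_trans (max_card _)) // card_ffun card_ord.
move=> t1 t2; rewrite !inE => /forallP rad1 /forallP rad2 /ffunP low12.
apply/val_inj/eqP; rewrite -subr_eq0; apply/eqP/(band_radical_eq0 b_band b_diag b_lin).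
- exact: size_npoly (t1 - t2).
- move=> i iN; have Xi : (size ('X^i : {poly F}) <= N)%N by rewrite size_polyXn.
  have := rad1 (npolyp N 'X^i); have := rad2 (npolyp N 'X^i).
  by rewrite npolypK // (zmod_morphism_linear (b_lin _)) => /eqP-> /eqP->; rewrite subrr.
- by move=> a da; have := low12 (Ordinal da); rewrite !ffunE coefB => ->; rewrite subrr.
Qed.

Section Correlation.
Variables (F : fieldType) (m : nat) (c : 'I_m.+1 -> F).
Implicit Types (a : F) (f u w : {poly F}).

Definition corr n l (u w : {poly F}) := \sum_(l <= i < n) u`_i * w`_(i - l).

(* Q_{A,2} and its polar form with the inner sums cut at [n]: any cut beyond the degree
   gives back Q_{A,2} ([QA2_QAt]), and a fixed cut makes [BAt n] bilinear. *)
Definition QAt n f := \sum_(l < m.+1) c l * corr n l f f.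

Definition BAt n u w := \sum_(l < m.+1) c l * (corr n l u w + corr n l w u).

Lemma corr_size n l u w : (size u <= n)%N -> corr n l u w = corr (size u) l u w.
Proof.
move=> un; rewrite /corr (big_nat_widen _ _ _ _ _ un) [RHS]big_mkcond.
apply: eq_big_nat => i _; case: ltnP => // /(nth_default 0)->.
by rewrite mul0r.
Qed.

Lemma QA2_QAt n f : (size f <= n)%N -> QA2 c f = QAt n f.
Proof. by move=> fn; apply: eq_bigr => l _; rewrite (corr_size _ _ fn). Qed.

Lemma corrDl n l u1 u2 w : corr n l (u1 + u2) w = corr n l u1 w + corr n l u2 w.
Proof. by rewrite -big_split; apply: eq_bigr => i _; rewrite coefD mulrDl. Qed.

Lemma corrDr n l u w1 w2 : corr n l u (w1 + w2) = corr n l u w1 + corr n l u w2.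
Proof. by rewrite -big_split; apply: eq_bigr => i _; rewrite coefD mulrDr. Qed.

Lemma corrZl n l a u w : corr n l (a *: u) w = a * corr n l u w.
Proof. by rewrite mulr_sumr; apply: eq_bigr => i _; rewrite coefZ mulrA. Qed.

Lemma corrZr n l a u w : corr n l u (a *: w) = a * corr n l u w.
Proof. by rewrite mulr_sumr; apply: eq_bigr => i _; rewrite coefZ mulrCA. Qed.

Lemma QAtD n u w : QAt n (u + w) = QAt n u + QAt n w + BAt n u w.
Proof.
rewrite /QAt /BAt -!big_split; apply: eq_bigr => l _ /=.
by rewrite !corrDl !corrDr; ring.
Qed.

Lemma BAtC n u w : BAt n u w = BAt n w u.
Proof. by apply: eq_bigr => l _; rewrite addrC. Qed.

Lemma BAtDl n u1 u2 w : BAt n (u1 + u2) w = BAt n u1 w + BAt n u2 w.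
Proof.
rewrite /BAt -big_split; apply: eq_bigr => l _ /=.
by rewrite corrDl corrDr; ring.
Qed.

Lemma BAt_linear_l n w : scalar (BAt n ^~ w).
Proof.
move=> a u1 u2; rewrite /BAt mulr_sumr -big_split; apply: eq_bigr => l _ /=.
by rewrite !corrDl !corrDr corrZl corrZr; ring.
Qed.

Lemma BAt_linear_r n u : scalar (BAt n u).
Proof. by move=> a w1 w2; rewrite !(BAtC _ u) BAt_linear_l. Qed.

Lemma corr0C n u w : corr n 0 u w = corr n 0 w u.
Proof. by apply: eq_bigr => i _; rewrite subn0 mulrC. Qed.

End Correlation.

Section MonicMultiple.
Variables (F : fieldType) (m : nat) (c : 'I_m.+1 -> F) (g : {poly F}) (k v : nat).
Hypothesis g_monic : g \is monic.
Hypothesis size_g : size g = k.+1.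
Hypothesis gv_neq0 : g`_v != 0.
Hypothesis g_low : forall b, (b < v)%N -> g`_b = 0.

Local Notation d := (m + k - v)%N.

Lemma valuation_le_deg : (v <= k)%N.
Proof.
by rewrite -ltnS -size_g; apply: contraR gv_neq0; rewrite -leqNgt => /(nth_default 0)->.
Qed.

Lemma coef_deg_monic : g`_k = 1.
Proof. by have := monicP g_monic; rewrite /lead_coef size_g. Qed.

Lemma coef_gXn_out i a : ((a < i + v) || (i + k < a))%N -> (g * 'X^i)`_a = 0.
Proof.
move=> a_out; rewrite coefMXn; case: ltnP => // ia.
case/orP: a_out => [av|ka]; first by rewrite g_low //; lia.
by rewrite nth_default // size_g; lia.
Qed.

Lemma coef_gXn i a : (i <= a)%N -> (g * 'X^i)`_a = g`_(a - i).
Proof. by rewrite coefMXn ltnNge => ->. Qed.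

Lemma corr_gXn_eq0_below n l i j :
  (i + k < j + v + l)%N -> corr n l (g * 'X^i) (g * 'X^j) = 0.
Proof.
move=> ij; rewrite /corr big_nat_cond big1 // => a /andP[/andP[la _] _].
have [ka|ak] := ltnP (i + k) a; first by rewrite coef_gXn_out ?ka ?orbT ?mul0r.
by rewrite [X in _ * X]coef_gXn_out ?mulr0 //; apply/orP; left; lia.
Qed.

Lemma corr_gXn_eq0_above n l i j :
  (j + k + l < i + v)%N -> corr n l (g * 'X^i) (g * 'X^j) = 0.
Proof.
move=> ji; rewrite /corr big_nat_cond big1 // => a /andP[/andP[la _] _].
have [av|va] := ltnP a (i + v); first by rewrite coef_gXn_out ?av ?mul0r.
by rewrite [X in _ * X]coef_gXn_out ?mulr0 //; apply/orP; right; lia.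
Qed.

Lemma corr_gXn_edge n l i j : (j + k + l = i + v)%N -> (i + v < n)%N ->
  corr n l (g * 'X^i) (g * 'X^j) = g`_v.
Proof.
move=> ji vn; have lv : (l <= i + v)%N by lia.
rewrite /corr (big_cat_nat lv) ?(ltnW vn) //= [X in _ + X]big_ltn //.
rewrite big_nat_cond big1 ?add0r.
  rewrite big_nat_cond big1 ?addr0 => [|a /andP[/andP[va _] _]].
    rewrite !coef_gXn; try lia.
    by rewrite addKn (_ : i + v - l - j = k)%N ?coef_deg_monic ?mulr1 //; lia.
  by rewrite [X in _ * X]coef_gXn_out ?mulr0 //; apply/orP; right; lia.
by move=> a /andP[/andP[_ ai] _]; rewrite coef_gXn_out ?ai ?mul0r.
Qed.

Lemma BAt_gXn_band n i j : (i + d < j)%N -> BAt c n (g * 'X^i) (g * 'X^j) = 0.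
Proof.
move=> ij; have vk := valuation_le_deg; apply: big1 => l _; have := ltn_ord l.
by move=> lm; rewrite corr_gXn_eq0_below ?corr_gXn_eq0_above ?addr0 ?mulr0 //; lia.
Qed.

Lemma BAt_gXn_diag n i : (i + m + k < n)%N ->
  BAt c n (g * 'X^i) (g * 'X^(i + d)) = c ord_max * g`_v *+ (m == 0%N).+1.
Proof.
move=> imn; have vk := valuation_le_deg.
rewrite /BAt big_ord_recr /= big1 ?add0r => [|l _]; last first.
  have := ltn_ord l => lm.
  by rewrite corr_gXn_eq0_below ?corr_gXn_eq0_above ?addr0 ?mulr0 //; lia.
rewrite [corr _ _ _ (g * 'X^i)]corr_gXn_edge; try lia.
rewrite -mulrnAr mulrS addrC; congr (_ * (_ + _)).
case: eqP => [m0|/eqP m_neq0]; last by rewrite corr_gXn_eq0_below //; lia.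
by rewrite m0 mulr1n corr0C corr_gXn_edge //; lia.
Qed.

Hypothesis c_max_neq0 : c ord_max != 0.
Hypothesis two_neq0 : (2 : F) != 0.

Lemma BAt_gXn_diag_neq0 N i : (i + d <= N)%N ->
  BAt c (k + N).+1 (g * 'X^i) (g * 'X^(i + d)) != 0.
Proof.
move=> idN; rewrite BAt_gXn_diag; last by have := valuation_le_deg; lia.
by rewrite -mulr_natr !mulf_neq0 //; case: (m == 0%N); rewrite ?oner_neq0.
Qed.

Lemma BAt_mul_linear N u : scalar (fun w => BAt c (k + N).+1 (g * u) (g * w)).
Proof. by move=> a w1 w2 /=; rewrite mulrDr -scalerAr BAt_linear_r. Qed.

Lemma polar_QA2_gXn N i j : (i <= N)%N -> (j <= N)%N ->
  polar (fun h => QA2 c (g * h)) 'X^i 'X^j = BAt c (k + N).+1 (g * 'X^i) (g * 'X^j).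
Proof.
have size_gXn a : (a <= N)%N -> (size (g * 'X^a)%R <= (k + N).+1)%N.
  move=> aN; apply: leq_trans (size_polyMleq _ _) _; rewrite size_g size_polyXn; lia.
move=> iN jN; rewrite /polar mulrDr !(QA2_QAt c (n := (k + N).+1)) ?size_gXn //.
  by rewrite QAtD; ring.
by apply: leq_trans (size_polyD _ _) _; rewrite geq_max !size_gXn.
Qed.

Lemma polar_rank_QA2_mul N :
  (N.+1 - (k + m) <= polar_rank_VN N (fun h => QA2 c (g * h)))%N.
Proof.
have vk := valuation_le_deg.
have := band_gram_rank (b := fun u w => BAt c (k + N).+1 (g * u) (g * w))
  (@BAt_gXn_band _) (@BAt_gXn_diag_neq0 N).
rewrite /polar_rank_VN; set M := \matrix_(i, j) _; set M' := \matrix_(i, j) _.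
have -> : M' = M by apply/matrixP => i j; rewrite !mxE (@polar_QA2_gXn N) // -ltnS.
by apply: leq_trans; lia.
Qed.
End MonicMultiple.

Lemma sum_monic_npoly (R : finNzRingType) (V : nmodType) N (G : {poly R} -> V) :
  \sum_(h : {poly_N.+1 R} | ((h : {poly R}) \is monic) && (size (h : {poly R}) == N.+1))
     G h = \sum_(y : {poly_N R}) G ('X^N + (y : {poly R})).
Proof.
have size_XnD (y : {poly_N R}) : size ('X^N + (y : {poly R})) = N.+1.
  by rewrite size_polyDl size_polyXn // ltnS size_npoly.
pose mon (y : {poly_N R}) : {poly_N.+1 R} := npolyp N.+1 ('X^N + (y : {poly R})).
pose unmon (h : {poly_N.+1 R}) : {poly_N R} := npolyp N ((h : {poly R}) - 'X^N).
have monE y : mon y = 'X^N + (y : {poly R}) :> {poly R} by rewrite npolypK // size_XnD.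
have size_unmon (h : {poly_N.+1 R}) :
    (h : {poly R}) \is monic -> size (h : {poly R}) = N.+1 ->
    (size ((h : {poly R}) - 'X^N)%R <= N)%N.
  move=> h_monic h_size; apply/leq_sizeP => j jN; rewrite coefB coefXn.
  case: (ltngtP N j) jN => [Nj _|jN Nj|<- _]; [|lia|].
  - by rewrite nth_default ?subr0 ?h_size // eq_sym (gtn_eqF Nj).
  - by rewrite mulr1n -(monicP h_monic) /lead_coef h_size subrr.
rewrite (reindex_onto mon unmon) => [|h /andP[h_monic /eqP h_size]]; last first.
  by apply/val_inj; rewrite /= monE npolypK ?size_unmon // addrC subrK.
apply: eq_big => y; last by rewrite monE.
have -> : unmon (mon y) = y.
  by apply/val_inj; rewrite /unmon monE addrC addKr [val _]npolypK ?size_npoly.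
rewrite monE size_XnD monicE lead_coefDl ?lead_coefXn ?size_polyXn ?ltnS ?size_npoly //.
by rewrite !eqxx.
Qed.

Lemma ler_div_sqrtC (x q : algC) (N e : nat) : 0 <= x -> 0 < q -> (e <= N)%N ->
  x ^+ 2 <= q ^+ N * q ^+ (N - e) -> x <= q ^+ N / sqrtC q ^+ e.
Proof.
move=> x_ge0 q_gt0 eN x2; have q_ge0 := ltW q_gt0.
have sq_gt0 : 0 < sqrtC q by rewrite sqrtC_gt0.
rewrite ler_pdivlMr ?exprn_gt0 // -(@ler_pXn2r _ 2) ?nnegrE //; last 2 first.
- by rewrite mulr_ge0 ?exprn_ge0 ?sqrtC_ge0.
- exact: exprn_ge0.
rewrite exprMn -exprM mulnC exprM sqrtCK.
apply: le_trans (ler_wpM2r (exprn_ge0 e q_ge0) x2) _.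
by rewrite -!exprM -!exprD (_ : N + (N - e) + e = N * 2)%N //; lia.
Qed.

Section MonicCharSum.
Variables (F : finFieldType) (m : nat) (c : 'I_m.+1 -> F).
Hypothesis c_max_neq0 : c ord_max != 0.
Hypothesis two_neq0 : (2 : F) != 0.

Lemma card_radical_BAt_monic k N (g : {poly F}) : g \is monic -> size g = k.+1 ->
  (#|[set t : {poly_N F} | [forall y : {poly_N F},
       BAt c (k + N).+1 (g * (y : {poly F})) (g * (t : {poly F})) == 0%R]]|
     <= #|F| ^ (N - (N - (k + m))))%N.
Proof.
move=> g_monic size_g; have [v gv_neq0 g_low] := poly_valuation (monic_neq0 g_monic).
have vk := valuation_le_deg size_g gv_neq0.
have [Nkm|kmN] := leqP N (k + m).
  by rewrite (_ : N - (N - (k + m)) = N)%N -?(card_npoly F N) ?max_card //; lia.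
rewrite (_ : N - (N - (k + m)) = k + m)%N; last by lia.
apply: leq_trans (card_band_radical (b := fun u w => BAt c (k + N).+1 (g * u) (g * w))
  (BAt_gXn_band c g_monic size_g gv_neq0 g_low _)
  (BAt_gXn_diag_neq0 g_monic size_g gv_neq0 g_low c_max_neq0 two_neq0 (N := N))
  (BAt_mul_linear c g k N)) _.
by rewrite leq_pexp2l ?(ltnW (card_finNzRing_gt1 F)) //; lia.
Qed.

Variable psi : F -> algC.
Hypothesis psi_char : nontriv_add_char psi.

Lemma norm_add_char_sum_QA_monic k N (g : {poly F}) (l : nat -> F) :
    g \is monic -> size g = k.+1 ->
  `| \sum_(h : {poly_N.+1 F} | ((h : {poly F}) \is monic) && (size (h : {poly F}) == N.+1))
        psi (QA c (k + N) l (g * (h : {poly F}))) |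
    <= (#|F|%:R) ^+ N / (sqrtC (#|F|%:R)) ^+ (N - (k + m)).
Proof.
move=> g_monic size_g; set n := (k + N).+1.
rewrite (@sum_monic_npoly _ _ N (fun h => psi (QA c (k + N) l (g * h)))).
pose Lf (f : {poly F}) := \sum_(i < n) l i * f`_i.
pose D (t : {poly_N F}) := let gt := g * (t : {poly F}) in
  QAt c n gt + BAt c n (g * 'X^N) gt + Lf gt.
pose beta (y t : {poly_N F}) := BAt c n (g * (y : {poly F})) (g * (t : {poly F})).
have size_gh (h : {poly F}) : (size h <= N.+1)%N -> (size (g * h)%R <= n)%N.
  by move=> hN; apply: leq_trans (size_polyMleq _ _) _; rewrite size_g /n; lia.
have size_XnD (y : {poly_N F}) : (size ('X^N + (y : {poly F}))%R <= N.+1)%N.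
  apply: leq_trans (size_polyD _ _) _; rewrite geq_max size_polyXn leqnn.
  exact: leqW (size_npoly y).
have PhiD (y t : {poly_N F}) :
    QA c (k + N) l (g * ('X^N + ((y + t : {poly_N F}) : {poly F}))) =
    QA c (k + N) l (g * ('X^N + (y : {poly F}))) + D t + beta y t.
  rewrite /QA !(QA2_QAt c (n := n)) ?size_gh ?size_XnD //.
  rewrite [(y + t : {poly_N F}) : {poly F}]/= addrA mulrDr QAtD mulrDr BAtDl.
  under eq_bigr => i _ do rewrite coefD mulrDr.
  by rewrite big_split /D /beta /Lf /=; ring.
have beta_lin t : scalar (beta ^~ t).
  by move=> a y1 y2; rewrite /beta /= mulrDr -scalerAr BAt_linear_l.
apply: ler_div_sqrtC; rewrite ?normr_ge0 ?leq_subr ?ltr0n ?(ltnW (card_finNzRing_gt1 F)) //.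
apply: le_trans (sqr_norm_add_char_sum_le psi_char PhiD beta_lin) _.
rewrite card_npoly -!natrX -!natrM ler_nat leq_mul2l.
by rewrite (card_radical_BAt_monic _ g_monic size_g) orbT.
Qed.
End MonicCharSum.

Lemma polar_rank_QA2_monic (F : fieldType) m (c : 'I_m.+1 -> F) (g : {poly F}) k N :
    c ord_max != 0 -> (2 : F) != 0 -> g \is monic -> size g = k.+1 ->
  (N.+1 - (k + m) <= polar_rank_VN N (fun h => QA2 c (g * h)))%N.
Proof.
move=> c_max_neq0 two_neq0 g_monic size_g.
have [v gv_neq0 g_low] := poly_valuation (monic_neq0 g_monic).
exact: (polar_rank_QA2_mul g_monic size_g gv_neq0 g_low c_max_neq0 two_neq0 N).
Qed.

Theorem lemma7p1 (F : finFieldType) (hq : odd #|F|)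
    (m : nat) (c : 'I_m.+1 -> F) (hcm : c ord_max != 0) :
  (forall (k N : nat) (g : {poly F}), g \is monic -> size g = k.+1 ->
     (N.+1 - (k + m) <= polar_rank_VN N (fun h => QA2 c (g * h)))%N)
  /\
  exists C : algC, forall (k N : nat) (g : {poly F}) (psi : F -> algC) (l : nat -> F),
    g \is monic -> size g = k.+1 -> nontriv_add_char psi ->
    `| \sum_(h : {poly_N.+1 F} | ((h : {poly F}) \is monic) && (size (h : {poly F}) == N.+1))
          psi (QA c (k + N) l (g * (h : {poly F}))) |
      <= C * (#|F|%:R) ^+ N / (sqrtC (#|F|%:R)) ^+ (N - (k + m)).
Proof.
have two_neq0 := two_neq0_odd_card hq.
split=> [k N g g_monic size_g|]; first exact: polar_rank_QA2_monic.
exists 1 => k N g psi l g_monic size_g psi_char; rewrite mul1r.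
exact: norm_add_char_sum_QA_monic.
Qed.
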